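(* Let $X$ be a strictly convex Banach space such that every finite subset of $\ell_2$ admits an isometric embedding into $X$, but $\ell_2$ does not admit an isomorphic (linear) embedding into $X$. Then $D(X)>1$; that is, there exist a locally finite metric space $A$ and a constant $C\ge 1$ such that every finite subset of $A$ admits a bilipschitz embedding into $X$ with distortion $\le C$, but $A$ admits no bilipschitz embedding into $X$ with distortion $\le C$. *)

From Stdlib Require Import Reals List.
Open Scope R_scope.

Record Banach := {
  bcar :> Type;
  vzero : bcar;
  vadd : bcar -> bcar -> bcar;
  vopp : bcar -> bcar;
  vscal : R -> bcar -> bcar;
  vnorm : bcar -> R;
  vadd_assoc : forall x y z, vadd x (vadd y z) = vadd (vadd x y) z;
  vadd_comm : forall x y, vadd x y = vadd y x;
  vadd_0 : forall x, vadd x vzero = x;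
  vadd_opp : forall x, vadd x (vopp x) = vzero;
  vscal_1 : forall x, vscal 1 x = x;
  vscal_assoc : forall a b x, vscal a (vscal b x) = vscal (a * b) x;
  vscal_addR : forall a b x, vscal (a + b) x = vadd (vscal a x) (vscal b x);
  vscal_addV : forall a x y, vscal a (vadd x y) = vadd (vscal a x) (vscal a y);
  vnorm_eq0 : forall x, vnorm x = 0 -> x = vzero;
  vnorm_scal : forall a x, vnorm (vscal a x) = Rabs a * vnorm x;
  vnorm_triangle : forall x y, vnorm (vadd x y) <= vnorm x + vnorm y;
  vcomplete : forall u : nat -> bcar,
    (forall eps, 0 < eps -> exists N, forall m n, (N <= m)%nat -> (N <= n)%nat ->
        vnorm (vadd (u m) (vopp (u n))) < eps) ->
    exists l, forall eps, 0 < eps -> exists N, forall n, (N <= n)%nat ->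
        vnorm (vadd (u n) (vopp l)) < eps
}.

Definition vsub (X : Banach) (x y : X) : X := vadd X x (vopp X y).

Definition strictly_convex (X : Banach) : Prop :=
  forall x y : X, vnorm X x = 1 -> vnorm X y = 1 -> x <> y ->
    vnorm X (vscal X (1/2) (vadd X x y)) < 1.

Definition l2 : Type :=
  { a : nat -> R | exists s, infinite_sum (fun n => (a n) ^ 2) s }.

Definition l2_dist_is (x y : l2) (d : R) : Prop :=
  0 <= d /\ infinite_sum (fun n => (proj1_sig x n - proj1_sig y n) ^ 2) (d ^ 2).

Definition l2_norm_is (x : l2) (d : R) : Prop :=
  0 <= d /\ infinite_sum (fun n => (proj1_sig x n) ^ 2) (d ^ 2).

Definition l2_finitely_isometric (X : Banach) : Prop :=
  forall s : list l2, exists f : l2 -> X,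
    forall x y d, In x s -> In y s -> l2_dist_is x y d ->
      vnorm X (vsub X (f x) (f y)) = d.

Definition l2_isomorphic_embeds (X : Banach) : Prop :=
  exists (T : l2 -> X) (c K : R), 0 < c /\
    (forall (x y z : l2) (a b : R),
        (forall n, proj1_sig z n = a * proj1_sig x n + b * proj1_sig y n) ->
        T z = vadd X (vscal X a (T x)) (vscal X b (T y))) /\
    (forall x d, l2_norm_is x d -> c * d <= vnorm X (T x) <= K * d).

Record MetricSpace := {
  mcar :> Type;
  mdist : mcar -> mcar -> R;
  mdist_eq0 : forall x y, mdist x y = 0 <-> x = y;
  mdist_sym : forall x y, mdist x y = mdist y x;
  mdist_triangle : forall x y z, mdist x z <= mdist x y + mdist y z
}.

Definition locally_finite (A : MetricSpace) : Prop :=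
  forall (x : A) (r : R), exists s : list A,
    forall y, mdist A x y <= r -> In y s.

Definition bilip_embeds_le (A : MetricSpace) (X : Banach) (P : A -> Prop) (C : R) : Prop :=
  exists (f : A -> X) (r : R), 0 < r /\
    forall x y, P x -> P y ->
      r * mdist A x y <= vnorm X (vsub X (f x) (f y)) <= C * r * mdist A x y.

(* Let A be the set of integer lists l, placed in l_2 at (length l, l_0, l_1, ...). Balls
   of A are finite, and every finite subset of A is a finite subset of l_2, hence embeds
   isometrically into X. Suppose some f : A -> X satisfies |f a - f b| = r d(a, b). Since l
   is the metric midpoint of the empty list and of the list 2l (doubled length, doubled
   entries), strict convexity forces f (2l) - f nil = 2 (f l - f nil). Rescaling f along
   dyadic integer approximations of (1, x) then yields Cauchy sequences in X, whose limits
   define an r-isometry of l_2 into X. An isometry of l_2 into a strictly convex space that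
   fixes 0 preserves midpoints and is therefore linear, so l_2 would embed into X. *)

From Stdlib Require Import Reals ZArith List Lra Lia ClassicalEpsilon Classical.
Open Scope R_scope.

(** * Vector identities and strict convexity *)

Section BanachAlgebra.
Variable X : Banach.

Lemma vadd_0l (x : X) : vadd X (vzero X) x = x.
Proof. rewrite vadd_comm; apply vadd_0. Qed.

Lemma vadd_reg_r (a b c : X) : vadd X a c = vadd X b c -> a = b.
Proof.
  intro H.
  rewrite <- (vadd_0 X a), <- (vadd_0 X b), <- (vadd_opp X c), !vadd_assoc, H.
  reflexivity.
Qed.

Lemma vscal_0l (x : X) : vscal X 0 x = vzero X.
Proof.
  apply (vadd_reg_r _ _ (vscal X 0 x)).
  rewrite <- vscal_addR, Rplus_0_l, vadd_0l; reflexivity.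
Qed.

Lemma vscal_0r (a : R) : vscal X a (vzero X) = vzero X.
Proof. rewrite <- (vscal_0l (vzero X)), vscal_assoc, Rmult_0_r; reflexivity. Qed.

Lemma vopp_scal (x : X) : vopp X x = vscal X (-1) x.
Proof.
  symmetry; apply (vadd_reg_r _ _ x).
  rewrite <- (vscal_1 X x) at 2.
  rewrite <- vscal_addR. replace (-1 + 1) with 0 by ring.
  rewrite vscal_0l, vadd_comm, vadd_opp; reflexivity.
Qed.

Lemma vnorm_0 : vnorm X (vzero X) = 0.
Proof. rewrite <- (vscal_0l (vzero X)), vnorm_scal, Rabs_R0; ring. Qed.

Lemma vnorm_opp (x : X) : vnorm X (vopp X x) = vnorm X x.
Proof. rewrite vopp_scal, vnorm_scal, Rabs_left by lra. ring. Qed.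

Lemma vnorm_ge0 (x : X) : 0 <= vnorm X x.
Proof.
  pose proof (vnorm_triangle X x (vopp X x)) as H.
  rewrite vadd_opp, vnorm_0, vnorm_opp in H. lra.
Qed.

Lemma vscal_opp (c : R) (y : X) : vscal X c (vopp X y) = vopp X (vscal X c y).
Proof. rewrite !vopp_scal, !vscal_assoc, Rmult_comm; reflexivity. Qed.

Lemma vopp_add (a b : X) : vopp X (vadd X a b) = vadd X (vopp X a) (vopp X b).
Proof. rewrite !vopp_scal; apply vscal_addV. Qed.

Lemma vopp_opp (a : X) : vopp X (vopp X a) = a.
Proof.
  rewrite !vopp_scal, vscal_assoc. replace (-1 * -1) with 1 by ring. apply vscal_1.
Qed.

Lemma vadd_addACA (a b c d : X) :
  vadd X (vadd X a b) (vadd X c d) = vadd X (vadd X a c) (vadd X b d).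
Proof.
  rewrite !vadd_assoc; f_equal.
  rewrite <- !vadd_assoc; f_equal; apply vadd_comm.
Qed.

Lemma vsub_0r (a : X) : vsub X a (vzero X) = a.
Proof. unfold vsub. rewrite vopp_scal, vscal_0r, vadd_0. reflexivity. Qed.

Lemma vsub_diag (x : X) : vsub X x x = vzero X.
Proof. apply vadd_opp. Qed.

Lemma vsub_add_vsub (p m q : X) : vadd X (vsub X m p) (vsub X q m) = vsub X q p.
Proof.
  unfold vsub. rewrite (vadd_comm X (vadd X m _)), <- vadd_assoc. f_equal.
  rewrite vadd_assoc, (vadd_comm X (vopp X m)), vadd_opp, vadd_0l. reflexivity.
Qed.

Lemma vsub_vsub_cancel (a b e : X) : vsub X (vsub X a e) (vsub X b e) = vsub X a b.
Proof.
  unfold vsub. rewrite vopp_add, vopp_opp, vadd_addACA.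
  rewrite (vadd_comm X (vopp X e)), vadd_opp, vadd_0. reflexivity.
Qed.

Lemma vscal_sub (c : R) (x y : X) :
  vscal X c (vsub X x y) = vsub X (vscal X c x) (vscal X c y).
Proof. unfold vsub. rewrite vscal_addV, vscal_opp. reflexivity. Qed.

Lemma vnorm_sub_sym (x y : X) : vnorm X (vsub X x y) = vnorm X (vsub X y x).
Proof.
  rewrite <- vnorm_opp. unfold vsub. rewrite vopp_add, vopp_opp, vadd_comm. reflexivity.
Qed.

Lemma vnorm_sub_triangle (a b c : X) :
  vnorm X (vsub X a c) <= vnorm X (vsub X a b) + vnorm X (vsub X b c).
Proof.
  pose proof (vnorm_triangle X (vsub X b c) (vsub X a b)) as H.
  rewrite vsub_add_vsub in H. lra.
Qed.

Lemma vnorm_sub_quad (a b a' b' : X) :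
  Rabs (vnorm X (vsub X a b) - vnorm X (vsub X a' b')) <=
  vnorm X (vsub X a a') + vnorm X (vsub X b b').
Proof.
  pose proof (vnorm_sub_triangle a a' b). pose proof (vnorm_sub_triangle a' b' b).
  pose proof (vnorm_sub_triangle a' a b'). pose proof (vnorm_sub_triangle a b b').
  pose proof (vnorm_sub_sym a a'). pose proof (vnorm_sub_sym b b').
  apply Rabs_le; split; lra.
Qed.

Lemma vmidpoint_of_vsub (a b c : X) :
  vsub X a b = vscal X (1/2) (vsub X c b) -> a = vscal X (1/2) (vadd X b c).
Proof.
  intros H.
  assert (Ha : a = vadd X (vsub X a b) b).
  { unfold vsub. rewrite <- vadd_assoc, (vadd_comm X (vopp X b)), vadd_opp, vadd_0.
    reflexivity. }
  rewrite Ha, H. unfold vsub. rewrite vopp_scal, !vscal_addV, vscal_assoc, <- vadd_assoc.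
  rewrite <- (vscal_1 X b) at 2. rewrite <- vscal_addR, vadd_comm.
  replace (1 / 2 * -1 + 1) with (1 / 2) by field. reflexivity.
Qed.

Hypothesis Hsc : strictly_convex X.

Lemma vscal_normalize (u : X) : vnorm X u <> 0 -> u = vscal X (vnorm X u) (vscal X (/ vnorm X u) u).
Proof. intro Hu. rewrite vscal_assoc, Rinv_r, vscal_1 by exact Hu. reflexivity. Qed.

(* Write [u + v = a (u' + v') + (b - a) v'] with unit vectors [u', v']:
   strict convexity makes [|u' + v'| < 2] unless [u' = v']. *)
Lemma strictly_convex_norm_add_eq_le (u v : X) :
  0 < vnorm X u <= vnorm X v ->
  vnorm X (vadd X u v) = vnorm X u + vnorm X v ->
  vscal X (vnorm X v) u = vscal X (vnorm X u) v.
Proof.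
  set (a := vnorm X u); set (b := vnorm X v); intros Hab Heq.
  set (u' := vscal X (/a) u); set (v' := vscal X (/b) v).
  assert (Hu : u = vscal X a u') by (apply vscal_normalize; fold a; lra).
  assert (Hv : v = vscal X b v') by (apply vscal_normalize; fold b; lra).
  assert (Nu : vnorm X u' = 1).
  { unfold u'. rewrite vnorm_scal, Rabs_right by (apply Rle_ge, Rlt_le, Rinv_0_lt_compat; lra).
    fold a. field. lra. }
  assert (Nv : vnorm X v' = 1).
  { unfold v'. rewrite vnorm_scal, Rabs_right by (apply Rle_ge, Rlt_le, Rinv_0_lt_compat; lra).
    fold b. field. lra. }
  destruct (classic (u' = v')) as [E|NE].
  - rewrite Hu, Hv, E, !vscal_assoc, Rmult_comm. reflexivity.
  - exfalso. pose proof (Hsc u' v' Nu Nv NE) as Hs.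
    rewrite vnorm_scal, Rabs_right in Hs by lra.
    assert (Huv : vadd X u v = vadd X (vscal X a (vadd X u' v')) (vscal X (b - a) v')).
    { rewrite vscal_addV, <- vadd_assoc, <- vscal_addR.
      replace (a + (b - a)) with b by ring. rewrite <- Hu, <- Hv. reflexivity. }
    pose proof (vnorm_triangle X (vscal X a (vadd X u' v')) (vscal X (b - a) v')) as T.
    rewrite <- Huv, !vnorm_scal, Nv, (Rabs_right a), (Rabs_right (b - a)) in T by lra.
    assert (a * vnorm X (vadd X u' v') < a * 2) by (apply Rmult_lt_compat_l; lra).
    fold a b in Heq. lra.
Qed.

Lemma strictly_convex_norm_add_eq (u v : X) :
  vnorm X (vadd X u v) = vnorm X u + vnorm X v ->
  vscal X (vnorm X v) u = vscal X (vnorm X u) v.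
Proof.
  intro Heq.
  destruct (Req_dec (vnorm X u) 0) as [Hu0|Hu0].
  { rewrite Hu0, (vnorm_eq0 X u Hu0), vscal_0r, vscal_0l. reflexivity. }
  destruct (Req_dec (vnorm X v) 0) as [Hv0|Hv0].
  { rewrite Hv0, (vnorm_eq0 X v Hv0), vscal_0r, vscal_0l. reflexivity. }
  pose proof (vnorm_ge0 u); pose proof (vnorm_ge0 v).
  destruct (Rle_dec (vnorm X u) (vnorm X v)).
  - apply strictly_convex_norm_add_eq_le; [lra | exact Heq].
  - symmetry; apply strictly_convex_norm_add_eq_le; [lra |].
    rewrite vadd_comm; lra.
Qed.

Lemma strictly_convex_between (p m q : X) (s D : R) :
  0 <= s <= 1 ->
  vnorm X (vsub X m p) = s * D -> vnorm X (vsub X q m) = (1 - s) * D ->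
  vnorm X (vsub X q p) = D ->
  vsub X m p = vscal X s (vsub X q p).
Proof.
  intros Hs Hmp Hqm Hqp.
  rewrite <- (vsub_add_vsub p m q) in Hqp |- *.
  set (u := vsub X m p) in *; set (v := vsub X q m) in *.
  destruct (Req_dec D 0) as [D0|D0].
  { rewrite D0, Rmult_0_r in Hmp. rewrite D0 in Hqp.
    rewrite (vnorm_eq0 X _ Hqp), (vnorm_eq0 X _ Hmp), vscal_0r. reflexivity. }
  assert (E := strictly_convex_norm_add_eq u v).
  rewrite Hmp, Hqm, Hqp in E. specialize (E ltac:(ring)).
  apply (f_equal (vscal X (/ D))) in E. rewrite !vscal_assoc in E.
  replace (/ D * ((1 - s) * D)) with (1 - s) in E by (field; exact D0).
  replace (/ D * (s * D)) with s in E by (field; exact D0).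
  rewrite vscal_addV, <- E, <- vscal_addR.
  replace (s + (1 - s)) with 1 by ring. symmetry; apply vscal_1.
Qed.

End BanachAlgebra.

(** * Series and distances in l_2 *)

Lemma Rabs_le_between x a : Rabs x <= a -> - a <= x <= a.
Proof. unfold Rabs; destruct Rcase_abs; lra. Qed.

Lemma isum_ext (a b : nat -> R) s :
  (forall n, a n = b n) -> infinite_sum a s -> infinite_sum b s.
Proof.
  intros E H eps Heps. destruct (H eps Heps) as [N HN]. exists N. intros n Hn.
  rewrite <- (sum_eq a b n) by (intros; apply E). apply HN; exact Hn.
Qed.

Lemma isum_unique a s t : infinite_sum a s -> infinite_sum a t -> s = t.
Proof. apply UL_sequence. Qed.

Lemma isum_plus a b s t :
  infinite_sum a s -> infinite_sum b t -> infinite_sum (fun n => a n + b n) (s + t).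
Proof.
  intros Ha Hb eps Heps. destruct (CV_plus _ _ _ _ Ha Hb eps Heps) as [N HN].
  exists N. intros n Hn. rewrite plus_sum. apply HN; exact Hn.
Qed.

Lemma isum_scal a s c :
  infinite_sum a s -> infinite_sum (fun n => c * a n) (c * s).
Proof.
  intros H eps Heps.
  pose proof (Rabs_pos c).
  destruct (H (eps / (Rabs c + 1))) as [N HN]; [apply Rdiv_lt_0_compat; lra|].
  exists N. intros n Hn. specialize (HN n Hn). unfold R_dist in *.
  replace (sum_f_R0 (fun n => c * a n) n - c * s) with (c * (sum_f_R0 a n - s)).
  2:{ rewrite Rmult_minus_distr_l, scal_sum. f_equal. apply sum_eq; intros; ring. }
  rewrite Rabs_mult.
  apply Rle_lt_trans with ((Rabs c + 1) * Rabs (sum_f_R0 a n - s)).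
  { apply Rmult_le_compat_r; [apply Rabs_pos | lra]. }
  apply Rlt_le_trans with ((Rabs c + 1) * (eps / (Rabs c + 1))).
  { apply Rmult_lt_compat_l; lra. }
  right; field; lra.
Qed.

Lemma isum_finite a N :
  (forall i, (N < i)%nat -> a i = 0) -> infinite_sum a (sum_f_R0 a N).
Proof.
  intros Ha eps Heps. exists N. intros n Hn.
  replace (sum_f_R0 a n) with (sum_f_R0 a N).
  { unfold R_dist. rewrite Rminus_diag, Rabs_R0. exact Heps. }
  induction Hn as [|m Hm IH]; [reflexivity|].
  rewrite tech5, <- IH, (Ha (S m)) by lia. ring.
Qed.

Lemma psum_mono a n m :
  (forall i, 0 <= a i) -> (n <= m)%nat -> sum_f_R0 a n <= sum_f_R0 a m.
Proof.
  intros Ha H. induction H as [|m _ IH]; [lra|]. rewrite tech5. specialize (Ha (S m)). lra.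
Qed.

Lemma psum_le_isum a s n :
  (forall i, 0 <= a i) -> infinite_sum a s -> sum_f_R0 a n <= s.
Proof.
  intros Ha H. destruct (Rle_dec (sum_f_R0 a n) s) as [|NH]; [assumption|]. exfalso.
  destruct (H (sum_f_R0 a n - s)) as [N HN]; [lra|].
  specialize (HN (Nat.max N n) ltac:(lia)).
  pose proof (psum_mono a n (Nat.max N n) Ha ltac:(lia)).
  unfold R_dist in HN. rewrite Rabs_right in HN by lra. lra.
Qed.

Lemma isum_ge0 a s : (forall i, 0 <= a i) -> infinite_sum a s -> 0 <= s.
Proof.
  intros Ha H. pose proof (psum_le_isum a s 0 Ha H). simpl in *. specialize (Ha 0%nat). lra.
Qed.

Lemma term_le_isum a s n : (forall i, 0 <= a i) -> infinite_sum a s -> a n <= s.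
Proof.
  intros Ha H. eapply Rle_trans; [|exact (psum_le_isum a s n Ha H)].
  destruct n as [|n]; simpl; [lra|].
  pose proof (cond_pos_sum a n Ha). specialize (Ha (S n)). lra.
Qed.

Lemma isum_le a b s t :
  (forall n, a n <= b n) -> infinite_sum a s -> infinite_sum b t -> s <= t.
Proof.
  intros Hab Ha Hb. eapply Rle_cv_lim; [|exact Ha|exact Hb].
  intros n. apply sum_Rle. intros i _. apply Hab.
Qed.

Definition seq_cons (c : R) (a : nat -> R) (i : nat) : R :=
  match i with O => c | S j => a j end.

Lemma isum_cons c a s :
  infinite_sum a s -> infinite_sum (seq_cons c a) (c + s).
Proof.
  intros H eps Heps. destruct (H eps Heps) as [N HN]. exists (S N).
  intros [|n] Hn; [lia|].
  replace (sum_f_R0 (seq_cons c a) (S n)) with (c + sum_f_R0 a n).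
  { unfold R_dist. replace (c + sum_f_R0 a n - (c + s)) with (sum_f_R0 a n - s) by ring.
    apply HN. lia. }
  clear Hn HN. induction n as [|n IH]; [reflexivity|].
  rewrite (tech5 (seq_cons c a) (S n)), <- IH, tech5. simpl. ring.
Qed.

Definition seq_tail (k : nat) (a : nat -> R) (i : nat) : R :=
  if (i <=? k)%nat then 0 else a i.

Lemma isum_tail a s k :
  infinite_sum a s -> infinite_sum (seq_tail k a) (s - sum_f_R0 a k).
Proof.
  intros H eps Heps. destruct (H eps Heps) as [N HN]. exists (Nat.max N k).
  intros n Hn.
  replace (sum_f_R0 (seq_tail k a) n) with (sum_f_R0 a n - sum_f_R0 a k).
  { unfold R_dist.
    replace (sum_f_R0 a n - sum_f_R0 a k - (s - sum_f_R0 a k)) with (sum_f_R0 a n - s) by ring.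
    apply HN. lia. }
  assert (Hk : (k <= n)%nat) by lia. clear Hn. induction Hk as [|m Hm IH].
  - rewrite Rminus_diag, <- (Rmult_0_l (INR (S k))), <- sum_cte.
    apply sum_eq. intros i Hi. unfold seq_tail. destruct (Nat.leb_spec i k); [reflexivity | lia].
  - rewrite !tech5, <- IH. unfold seq_tail.
    destruct (Nat.leb_spec (S m) k); [lia | ring].
Qed.

Definition square_summable (u : nat -> R) : Prop :=
  exists s, infinite_sum (fun n => (u n) ^ 2) s.

Definition seq_dist (u v : nat -> R) (d : R) : Prop :=
  0 <= d /\ infinite_sum (fun n => (u n - v n) ^ 2) (d ^ 2).

Lemma square_summable_finite u N : (forall i, (N < i)%nat -> u i = 0) -> square_summable u.
Proof.
  intro H. exists (sum_f_R0 (fun n => u n ^ 2) N). apply isum_finite.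
  intros i Hi. rewrite H by exact Hi. ring.
Qed.

Lemma square_summable_scal c u : square_summable u -> square_summable (fun n => c * u n).
Proof.
  intros [s Hs]. exists (c ^ 2 * s).
  apply (isum_ext (fun n => c ^ 2 * u n ^ 2)); [intros; ring | apply isum_scal, Hs].
Qed.

Lemma square_summable_cons c u : square_summable u -> square_summable (seq_cons c u).
Proof.
  intros [s Hs]. exists (c ^ 2 + s).
  apply (isum_ext (seq_cons (c ^ 2) (fun n => u n ^ 2))); [intros [|n]; reflexivity|].
  apply isum_cons, Hs.
Qed.

Lemma seq_dist_exists u v :
  square_summable u -> square_summable v -> exists d, seq_dist u v d.
Proof.
  intros [s Hs] [t Ht].
  assert (Hbound : forall n, 0 <= (u n - v n) ^ 2 <= 2 * u n ^ 2 + 2 * v n ^ 2).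
  { intros n. pose proof (pow2_ge_0 (u n + v n)). pose proof (pow2_ge_0 (u n - v n)). nra. }
  destruct (Rseries_CV_comp _ _ Hbound
              (exist _ _ (isum_plus _ _ _ _ (isum_scal _ _ 2 Hs) (isum_scal _ _ 2 Ht))))
    as [S HS].
  assert (0 <= S) by (apply (isum_ge0 _ _ (fun n => pow2_ge_0 _) HS)).
  exists (sqrt S). split; [apply sqrt_pos|]. rewrite pow2_sqrt; assumption.
Qed.

Lemma seq_dist_unique u v d d' : seq_dist u v d -> seq_dist u v d' -> d = d'.
Proof.
  intros [H1 H2] [H3 H4].
  rewrite <- (sqrt_pow2 d), <- (sqrt_pow2 d'), (isum_unique _ _ _ H2 H4) by assumption.
  reflexivity.
Qed.

Lemma seq_dist_scale u v u' v' d c :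
  seq_dist u v d -> 0 <= c -> (forall i, (u' i - v' i) ^ 2 = c ^ 2 * (u i - v i) ^ 2) ->
  seq_dist u' v' (c * d).
Proof.
  intros [Hd Hs] Hc E. split; [nra|].
  apply (isum_ext (fun n => c ^ 2 * (u n - v n) ^ 2)); [intros; symmetry; apply E|].
  replace ((c * d) ^ 2) with (c ^ 2 * d ^ 2) by ring. apply isum_scal, Hs.
Qed.

Lemma seq_dist_ext u v u' v' d :
  seq_dist u v d -> (forall i, (u' i - v' i) ^ 2 = (u i - v i) ^ 2) -> seq_dist u' v' d.
Proof.
  intros H E. rewrite <- (Rmult_1_l d). apply (seq_dist_scale u v); [exact H | lra |].
  intros; rewrite E; ring.
Qed.

Lemma seq_dist_sym u v d : seq_dist u v d -> seq_dist v u d.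
Proof. intros H. apply (seq_dist_ext _ _ _ _ _ H). intros; ring. Qed.

Lemma seq_dist_refl u : seq_dist u u 0.
Proof.
  split; [lra|]. apply (isum_ext (fun _ => 0)); [intros; ring|].
  replace (0 ^ 2) with (sum_f_R0 (fun _ => 0) 0) by (simpl; ring). apply isum_finite; auto.
Qed.

Lemma seq_dist_cons c u v d : seq_dist u v d -> seq_dist (seq_cons c u) (seq_cons c v) d.
Proof.
  intros [Hd Hs]. split; [exact Hd|]. rewrite <- (Rplus_0_l (d ^ 2)).
  apply (isum_ext (seq_cons 0 (fun n => (u n - v n) ^ 2))); [intros [|n]; simpl; ring|].
  apply isum_cons, Hs.
Qed.

Lemma seq_dist_coord u v d i : seq_dist u v d -> (u i - v i) ^ 2 <= d ^ 2.
Proof.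
  intros [_ H].
  apply (term_le_isum (fun n => (u n - v n) ^ 2)); [intros; apply pow2_ge_0 | exact H].
Qed.

Lemma seq_dist_eq0 u v : seq_dist u v 0 -> forall i, u i = v i.
Proof. intros H i. pose proof (seq_dist_coord u v 0 i H). nra. Qed.

Lemma seq_dist_finite u v N : (forall i, (N < i)%nat -> u i = v i) ->
  seq_dist u v (sqrt (sum_f_R0 (fun i => (u i - v i) ^ 2) N)).
Proof.
  intro H. assert (0 <= sum_f_R0 (fun i => (u i - v i) ^ 2) N).
  { apply cond_pos_sum. intros; apply pow2_ge_0. }
  split; [apply sqrt_pos|]. rewrite pow2_sqrt by assumption. apply isum_finite.
  intros i Hi. rewrite H by exact Hi. ring.
Qed.

(* The triangle inequality in l_2 is inherited from [X] through isometric copies of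
   finitely many points. *)
Section L2Triangle.
Variable X : Banach.
Hypothesis Hfin : l2_finitely_isometric X.

Lemma seq_dist_triangle u v w d1 d2 d3 :
  square_summable u -> square_summable v -> square_summable w ->
  seq_dist u v d1 -> seq_dist v w d2 -> seq_dist u w d3 -> d3 <= d1 + d2.
Proof.
  intros Hu Hv Hw H1 H2 H3.
  set (xu := exist _ u Hu : l2); set (xv := exist _ v Hv : l2); set (xw := exist _ w Hw : l2).
  destruct (Hfin (xu :: xv :: xw :: nil)) as [g Hg].
  rewrite <- (Hg xu xv d1), <- (Hg xv xw d2), <- (Hg xu xw d3) by (simpl; auto).
  apply vnorm_sub_triangle.
Qed.

Lemma seq_dist_quad u v u' v' d d' e e' :
  square_summable u -> square_summable v -> square_summable u' -> square_summable v' ->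
  seq_dist u v d -> seq_dist u' v' d' -> seq_dist u u' e -> seq_dist v v' e' ->
  Rabs (d - d') <= e + e'.
Proof.
  intros Hu Hv Hu' Hv' H1 H2 H3 H4.
  set (xu := exist _ u Hu : l2); set (xv := exist _ v Hv : l2).
  set (xu' := exist _ u' Hu' : l2); set (xv' := exist _ v' Hv' : l2).
  destruct (Hfin (xu :: xv :: xu' :: xv' :: nil)) as [g Hg].
  rewrite <- (Hg xu xv d), <- (Hg xu' xv' d'), <- (Hg xu xu' e), <- (Hg xv xv' e')
    by (simpl; auto).
  apply vnorm_sub_quad.
Qed.

End L2Triangle.

(** * The locally finite space of integer lists *)

(* A finite integer sequence [l] is placed in l_2 at [(length l, l_0, l_1, ...)]; the
   length coordinate separates lists that differ only by trailing zeros. *)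
Definition list_coords (l : list Z) (i : nat) : R :=
  match i with O => INR (length l) | S j => IZR (nth j l 0%Z) end.

Lemma list_coords_overflow l i : (length l < i)%nat -> list_coords l i = 0.
Proof. intros H. destruct i as [|j]; [lia|]. simpl. rewrite nth_overflow by lia. reflexivity. Qed.

Lemma list_coords_nil i : list_coords nil i = 0.
Proof. destruct i as [|[|j]]; reflexivity. Qed.

Lemma list_coords_inj a b : (forall i, list_coords a i = list_coords b i) -> a = b.
Proof.
  intros H. assert (HL : length a = length b) by (apply INR_eq, (H O)).
  apply (nth_ext a b 0%Z 0%Z HL). intros n _. apply eq_IZR, (H (S n)).
Qed.

Lemma square_summable_list_coords l : square_summable (list_coords l).
Proof. apply (square_summable_finite _ (length l)), list_coords_overflow. Qed.

Definition list_dist (a b : list Z) : R :=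
  sqrt (sum_f_R0 (fun i => (list_coords a i - list_coords b i) ^ 2) (length a + length b)).

Lemma list_dist_spec a b : seq_dist (list_coords a) (list_coords b) (list_dist a b).
Proof. apply seq_dist_finite. intros i Hi. rewrite !list_coords_overflow by lia. reflexivity. Qed.

Lemma list_dist_ge0 a b : 0 <= list_dist a b.
Proof. apply sqrt_pos. Qed.

Lemma list_dist_eq0 a b : list_dist a b = 0 <-> a = b.
Proof.
  split.
  - intros H. apply list_coords_inj, seq_dist_eq0. rewrite <- H. apply list_dist_spec.
  - intros <-. eapply seq_dist_unique; [apply list_dist_spec | apply seq_dist_refl].
Qed.

Lemma list_dist_sym a b : list_dist a b = list_dist b a.
Proof. eapply seq_dist_unique; [apply list_dist_spec | apply seq_dist_sym, list_dist_spec]. Qed.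

Fixpoint lists_of_length (n : nat) (E : list Z) : list (list Z) :=
  match n with
  | O => nil :: nil
  | S n => flat_map (fun l => map (fun e => e :: l) E) (lists_of_length n E)
  end.

Lemma in_lists_of_length E l :
  (forall z, In z l -> In z E) -> In l (lists_of_length (length l) E).
Proof.
  induction l as [|e l IH]; intros H; [left; reflexivity|].
  apply in_flat_map. exists l. split.
  - apply IH. intros z Hz. apply H. right; exact Hz.
  - apply (in_map (fun e0 => e0 :: l)), H. left; reflexivity.
Qed.

Definition zrange (B : nat) : list Z :=
  map (fun n => Z.of_nat n - Z.of_nat B)%Z (seq 0 (2 * B + 1)).

Lemma in_zrange B z : (Z.abs z <= Z.of_nat B)%Z -> In z (zrange B).
Proof.
  intros H. apply in_map_iff. exists (Z.to_nat (z + Z.of_nat B)). split.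
  - rewrite Z2Nat.id; lia.
  - apply in_seq. lia.
Qed.

Definition lists_bounded_by (B : nat) : list (list Z) :=
  flat_map (fun n => lists_of_length n (zrange B)) (seq 0 (S B)).

Lemma in_lists_bounded_by B l :
  (length l <= B)%nat -> (forall z, In z l -> (Z.abs z <= Z.of_nat B)%Z) ->
  In l (lists_bounded_by B).
Proof.
  intros HL HE. apply in_flat_map. exists (length l). split.
  - apply in_seq. lia.
  - apply in_lists_of_length. intros z Hz. apply in_zrange, HE, Hz.
Qed.

Fixpoint abs_sum (l : list Z) : Z :=
  match l with nil => 0%Z | z :: l => (Z.abs z + abs_sum l)%Z end.

Lemma abs_sum_ge0 l : (0 <= abs_sum l)%Z.
Proof. induction l; simpl; lia. Qed.

Lemma abs_nth_le_abs_sum l j : (Z.abs (nth j l 0%Z) <= abs_sum l)%Z.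
Proof.
  revert j; induction l as [|z l IH]; intros [|j]; simpl; [lia | lia | |].
  - pose proof (abs_sum_ge0 l). lia.
  - specialize (IH j). pose proof (Z.abs_nonneg z). lia.
Qed.

Lemma list_dist_ball_finite (x : list Z) (r : R) :
  exists s, forall y, list_dist x y <= r -> In y s.
Proof.
  destruct (INR_unbounded (r + INR (length x) + IZR (abs_sum x))) as [B HB].
  exists (lists_bounded_by B). intros y Hy.
  assert (Hc : forall i, - r <= list_coords y i - list_coords x i <= r).
  { intros i. pose proof (seq_dist_coord _ _ _ i (list_dist_spec x y)).
    pose proof (list_dist_ge0 x y). split; nra. }
  apply in_lists_bounded_by.
  - apply INR_le. pose proof (Hc O) as H0. simpl in H0.
    pose proof (IZR_le _ _ (abs_sum_ge0 x)). lra.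
  - intros z Hz. destruct (In_nth y z 0%Z Hz) as [j [_ <-]].
    pose proof (Hc (S j)) as Hj. simpl in Hj.
    pose proof (IZR_le _ _ (abs_nth_le_abs_sum x j)) as Hx. rewrite abs_IZR in Hx.
    pose proof (Rle_abs (IZR (nth j x 0%Z))). pose proof (Rle_abs (- IZR (nth j x 0%Z))).
    rewrite Rabs_Ropp in *. pose proof (pos_INR (length x)).
    apply le_IZR. rewrite abs_IZR, <- INR_IZR_INZ. apply Rabs_le. split; lra.
Qed.

(** * Dyadic approximation *)

Lemma list_coords_map_seq (g : nat -> Z) n i :
  list_coords (map g (seq 0 n)) i =
  match i with O => INR n | S j => if (j <? n)%nat then IZR (g j) else 0 end.
Proof.
  destruct i as [|j]; simpl; [rewrite length_map, length_seq; reflexivity|].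
  destruct (Nat.ltb_spec j n).
  - rewrite nth_indep with (d' := g 0%nat) by (rewrite length_map, length_seq; exact H).
    rewrite map_nth, seq_nth by exact H. reflexivity.
  - rewrite nth_overflow by (rewrite length_map, length_seq; exact H). reflexivity.
Qed.

Definition double_list (l : list Z) : list Z :=
  map (fun i => (2 * nth i l 0)%Z) (seq 0 (2 * length l)).

Lemma list_coords_double l i : list_coords (double_list l) i = 2 * list_coords l i.
Proof.
  unfold double_list. rewrite list_coords_map_seq. destruct i as [|j].
  - rewrite mult_INR. reflexivity.
  - destruct (Nat.ltb_spec j (2 * length l)); [apply mult_IZR|].
    simpl. rewrite nth_overflow by lia. ring.
Qed.

Lemma list_coords_iter_double m l i :
  list_coords (Nat.iter m double_list l) i = 2 ^ m * list_coords l i.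
Proof.
  induction m as [|m IH]; simpl; [ring|]. rewrite list_coords_double, IH. ring.
Qed.

Lemma INR_pow2 k : INR (2 ^ k) = 2 ^ k.
Proof. rewrite pow_INR. reflexivity. Qed.

Lemma pow2_gt0 k : 0 < 2 ^ k.
Proof. apply pow_lt. lra. Qed.

(* The length [2 ^ k] of [dyadic_list k x] becomes the leading coordinate [1] after
   rescaling by [2 ^ -k], and leaves room for the first [k] dyadic digits of [x]. *)
Definition dyadic_list (k : nat) (x : nat -> R) : list Z :=
  map (fun i => if (i <? k)%nat then Int_part (2 ^ k * x i) else 0%Z) (seq 0 (2 ^ k)).

Definition zero_list (k : nat) : list Z := repeat 0%Z (2 ^ k).

Definition dyadic_seq (k : nat) (x : nat -> R) (i : nat) : R :=
  / 2 ^ k * list_coords (dyadic_list k x) i.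

Lemma dyadic_seq_spec k x i :
  dyadic_seq k x i =
  match i with
  | O => 1
  | S j => if (j <? k)%nat then / 2 ^ k * IZR (Int_part (2 ^ k * x j)) else 0
  end.
Proof.
  pose proof (pow2_gt0 k). pose proof (Nat.pow_gt_lin_r 2 k ltac:(lia)).
  unfold dyadic_seq, dyadic_list. rewrite list_coords_map_seq.
  destruct i as [|j]; [rewrite INR_pow2; field; lra|].
  destruct (Nat.ltb_spec j k), (Nat.ltb_spec j (2 ^ k)); try lia; ring.
Qed.

Lemma iter_double_zero_list m k : Nat.iter m double_list (zero_list k) = zero_list (m + k).
Proof.
  apply list_coords_inj. intros [|j]; rewrite list_coords_iter_double; unfold zero_list; simpl.
  - rewrite !repeat_length, !INR_pow2, pow_add. ring.
  - rewrite !nth_repeat. ring.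
Qed.

Lemma dyadic_seq_sq_error k x i :
  (dyadic_seq k x i - seq_cons 1 x i) ^ 2 <=
  (if (i <=? k)%nat then (/ 2 ^ k) ^ 2 else 0) + seq_tail k (fun n => seq_cons 1 x n ^ 2) i.
Proof.
  pose proof (pow2_gt0 k). pose proof (pow2_ge_0 (/ 2 ^ k)).
  unfold seq_tail. rewrite dyadic_seq_spec.
  destruct (Nat.leb_spec i k); destruct i as [|j]; simpl seq_cons; try lia.
  - replace (1 - 1) with 0 by ring. simpl. lra.
  - destruct (Nat.ltb_spec j k); [|lia].
    destruct (base_Int_part (2 ^ k * x j)) as [Hfl1 Hfl2].
    set (t := IZR (Int_part (2 ^ k * x j)) - 2 ^ k * x j).
    assert (-1 < t <= 0) by (unfold t; lra).
    replace (/ 2 ^ k * IZR (Int_part (2 ^ k * x j)) - x j) with (/ 2 ^ k * t)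
      by (unfold t; field; lra).
    assert (t ^ 2 <= 1) by nra.
    rewrite Rpow_mult_distr. nra.
  - destruct (Nat.ltb_spec j k); [lia|]. lra.
Qed.

Lemma isum_cons_sq x s :
  infinite_sum (fun n => x n ^ 2) s -> infinite_sum (fun n => seq_cons 1 x n ^ 2) (1 + s).
Proof.
  intros Hs. apply (isum_ext (seq_cons 1 (fun n => x n ^ 2))); [intros [|n]; simpl; ring|].
  apply isum_cons, Hs.
Qed.

Lemma dyadic_seq_dist_bound k x s D :
  infinite_sum (fun n => x n ^ 2) s -> seq_dist (dyadic_seq k x) (seq_cons 1 x) D ->
  D ^ 2 <= INR (S k) * (/ 2 ^ k) ^ 2 + (1 + s - sum_f_R0 (fun n => seq_cons 1 x n ^ 2) k).
Proof.
  intros Hs [_ HD].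
  apply (isum_le _ _ _ _ (dyadic_seq_sq_error k x) HD).
  apply isum_plus; [|apply isum_tail, isum_cons_sq, Hs].
  replace (INR (S k) * (/ 2 ^ k) ^ 2)
    with (sum_f_R0 (fun i => if (i <=? k)%nat then (/ 2 ^ k) ^ 2 else 0) k).
  { apply isum_finite. intros i Hi. destruct (Nat.leb_spec i k); [lia | reflexivity]. }
  rewrite Rmult_comm, <- sum_cte. apply sum_eq. intros i Hi.
  destruct (Nat.leb_spec i k); [reflexivity | lia].
Qed.

Lemma dyadic_seq_cvg x : square_summable x -> forall eps, 0 < eps ->
  exists K, forall k D, (K <= k)%nat ->
    seq_dist (dyadic_seq k x) (seq_cons 1 x) D -> D < eps.
Proof.
  intros [s Hs] eps Heps.
  destruct (isum_cons_sq x s Hs (eps ^ 2 / 2)) as [K1 HK1]; [nra|].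
  destruct (pow_lt_1_zero (/ 2) ltac:(rewrite Rabs_right; lra) (eps ^ 2 / 2)) as [K2 HK2]; [nra|].
  exists (Nat.max K1 K2). intros k D Hk HD.
  pose proof (dyadic_seq_dist_bound k x s D Hs HD) as Hbound.
  specialize (HK1 k ltac:(lia)). specialize (HK2 k ltac:(lia)).
  unfold R_dist in HK1. apply Rabs_def2 in HK1.
  rewrite pow_inv, Rabs_right in HK2 by (left; apply Rinv_0_lt_compat, pow2_gt0).
  assert (Hlin : INR (S k) <= 2 ^ k).
  { rewrite <- INR_pow2. apply le_INR, Nat.pow_gt_lin_r. lia. }
  pose proof (pow2_gt0 k). pose proof (Rinv_0_lt_compat _ (pow2_gt0 k)).
  assert (INR (S k) * (/ 2 ^ k) ^ 2 <= / 2 ^ k).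
  { replace (/ 2 ^ k) with (2 ^ k * (/ 2 ^ k) ^ 2) at 2 by (field; lra).
    apply Rmult_le_compat_r; [apply pow2_ge_0 | exact Hlin]. }
  destruct HD as [HD0 _]. nra.
Qed.

Lemma square_summable_dyadic_seq k x : square_summable (dyadic_seq k x).
Proof.
  apply (square_summable_finite _ k). intros [|j] Hj; [lia|].
  rewrite dyadic_seq_spec. destruct (Nat.ltb_spec j k); [lia | reflexivity].
Qed.

(** * A distortion-one embedding of the integer lists induces an isometry of l_2 *)

Section ScaledIsometry.
Variable X : Banach.
Hypothesis Hsc : strictly_convex X.
Hypothesis Hfin : l2_finitely_isometric X.
Variable f : list Z -> X.
Variable r : R.
Hypothesis Hr : 0 < r.
Hypothesis Hf : forall a b, vnorm X (vsub X (f a) (f b)) = r * list_dist a b.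

(* [l] is the metric midpoint of [nil] and [double_list l]. *)
Lemma f_double l : vsub X (f (double_list l)) (f nil) = vscal X 2 (vsub X (f l) (f nil)).
Proof.
  set (n := list_dist nil l).
  assert (E1 : list_dist (double_list l) l = n).
  { eapply seq_dist_unique; [apply list_dist_spec|].
    apply (seq_dist_ext (list_coords nil) (list_coords l)); [apply list_dist_spec|].
    intros i. rewrite list_coords_double, list_coords_nil. ring. }
  assert (E2 : list_dist (double_list l) nil = 2 * n).
  { eapply seq_dist_unique; [apply list_dist_spec|].
    apply seq_dist_sym, (seq_dist_scale (list_coords nil) (list_coords l));
      [apply list_dist_spec | lra |].
    intros i; rewrite list_coords_double, list_coords_nil; ring. }
  pose proof (list_dist_ge0 nil l).
  assert (C := strictly_convex_between X Hsc (f nil) (f l) (f (double_list l)) (1/2) (2 * r * n)).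
  rewrite !Hf, (list_dist_sym l nil), E1, E2 in C. fold n in C.
  rewrite (C ltac:(lra) ltac:(field) ltac:(field) ltac:(ring)), vscal_assoc.
  replace (2 * (1 / 2)) with 1 by field. symmetry; apply vscal_1.
Qed.

Lemma f_iter_double m a b :
  vsub X (f (Nat.iter m double_list a)) (f (Nat.iter m double_list b)) =
  vscal X (2 ^ m) (vsub X (f a) (f b)).
Proof.
  assert (Hiter : forall l, vsub X (f (Nat.iter m double_list l)) (f nil) =
                            vscal X (2 ^ m) (vsub X (f l) (f nil))).
  { intros l. induction m as [|m IH]; simpl; [symmetry; apply vscal_1|].
    rewrite f_double, IH, vscal_assoc. reflexivity. }
  rewrite <- (vsub_vsub_cancel X _ _ (f nil)), !Hiter, <- vscal_sub, vsub_vsub_cancel.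
  reflexivity.
Qed.

Lemma f_scaled_dist (c : R) a b (u v : nat -> R) D : 0 <= c ->
  (forall i, u i = c * list_coords a i) -> (forall i, v i = c * list_coords b i) ->
  seq_dist u v D -> vnorm X (vscal X c (vsub X (f a) (f b))) = r * D.
Proof.
  intros Hc Hu Hv HD. rewrite vnorm_scal, Rabs_right, Hf by lra.
  assert (Hcd : seq_dist u v (c * list_dist a b)).
  { apply (seq_dist_scale (list_coords a) (list_coords b)); [apply list_dist_spec | exact Hc |].
    intros i. rewrite Hu, Hv. ring. }
  rewrite (seq_dist_unique _ _ _ _ HD Hcd). ring.
Qed.

(* In l_2, [dyadic_list k x] and [zero_list k] lie near [2 ^ k (1, x)] and [2 ^ k (1, 0)];
   [f_iter_double] makes these rescaled differences a Cauchy sequence in [k]. *)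
Definition approx (k : nat) (x : nat -> R) : X :=
  vscal X (/ 2 ^ k) (vsub X (f (dyadic_list k x)) (f (zero_list k))).

Lemma approx_dist m k x y D : seq_dist (dyadic_seq (m + k) x) (dyadic_seq k y) D ->
  vnorm X (vsub X (approx (m + k) x) (approx k y)) = r * D.
Proof.
  intros HD. pose proof (pow2_gt0 k). pose proof (pow2_gt0 m).
  assert (Ey : approx k y = vscal X (/ 2 ^ (m + k))
             (vsub X (f (Nat.iter m double_list (dyadic_list k y))) (f (zero_list (m + k))))).
  { rewrite <- iter_double_zero_list, f_iter_double, vscal_assoc. unfold approx. f_equal.
    rewrite pow_add. field. lra. }
  rewrite Ey. unfold approx at 1. rewrite <- vscal_sub, vsub_vsub_cancel.
  apply (f_scaled_dist _ _ _ (dyadic_seq (m + k) x) (dyadic_seq k y));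
    [left; apply Rinv_0_lt_compat, pow2_gt0 | reflexivity | | exact HD].
  intros i. unfold dyadic_seq. rewrite list_coords_iter_double, pow_add. field. lra.
Qed.

Lemma approx_cauchy x : square_summable x -> forall eps, 0 < eps ->
  exists N, forall m n, (N <= m)%nat -> (N <= n)%nat ->
    vnorm X (vsub X (approx m x) (approx n x)) < eps.
Proof.
  intros Hx eps Heps.
  destruct (dyadic_seq_cvg x Hx (eps / (2 * r))) as [K HK]; [apply Rdiv_lt_0_compat; lra|].
  exists K.
  assert (Hle : forall m n, (K <= n)%nat -> (n <= m)%nat ->
             vnorm X (vsub X (approx m x) (approx n x)) < eps).
  { intros m n Hn Hm. replace m with ((m - n) + n)%nat by lia.
    pose proof (fun k => square_summable_dyadic_seq k x) as Hp.
    pose proof (square_summable_cons 1 _ Hx) as Hx1.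
    destruct (seq_dist_exists _ _ (Hp ((m - n) + n)%nat) (Hp n)) as [D HD].
    destruct (seq_dist_exists _ _ (Hp ((m - n) + n)%nat) Hx1) as [D1 HD1].
    destruct (seq_dist_exists _ _ (Hp n) Hx1) as [D2 HD2].
    rewrite (approx_dist _ _ _ _ _ HD).
    pose proof (seq_dist_triangle X Hfin _ _ _ _ _ _ (Hp _) Hx1 (Hp n)
                  HD1 (seq_dist_sym _ _ _ HD2) HD).
    pose proof (HK ((m - n) + n)%nat D1 ltac:(lia) HD1). pose proof (HK n D2 Hn HD2).
    apply Rle_lt_trans with (r * (D1 + D2)); [apply Rmult_le_compat_l; lra|].
    replace eps with (r * (eps / (2 * r) + eps / (2 * r))) by (field; lra).
    apply Rmult_lt_compat_l; lra. }
  intros m n Hm Hn. destruct (Nat.le_ge_cases n m).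
  - apply Hle; assumption.
  - rewrite vnorm_sub_sym. apply Hle; assumption.
Qed.

Definition approx_lim (x : l2) : X :=
  proj1_sig (constructive_indefinite_description _
    (vcomplete X (fun n => approx n (proj1_sig x)) (approx_cauchy _ (proj2_sig x)))).

Lemma approx_lim_spec (x : l2) : forall eps, 0 < eps -> exists N, forall n, (N <= n)%nat ->
  vnorm X (vsub X (approx n (proj1_sig x)) (approx_lim x)) < eps.
Proof.
  unfold approx_lim. destruct (constructive_indefinite_description _ _) as [l Hl]. exact Hl.
Qed.

Lemma approx_lim_isometry (x y : l2) d : l2_dist_is x y d ->
  vnorm X (vsub X (approx_lim x) (approx_lim y)) = r * d.
Proof.
  destruct x as [x Hx], y as [y Hy]. intros Hd.
  set (tx := approx_lim (exist _ x Hx)); set (ty := approx_lim (exist _ y Hy)).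
  apply cond_eq. intros eps Heps.
  destruct (approx_lim_spec (exist _ x Hx) (eps / 4)) as [N1 HN1]; [lra|].
  destruct (approx_lim_spec (exist _ y Hy) (eps / 4)) as [N2 HN2]; [lra|].
  destruct (dyadic_seq_cvg x Hx (eps / (4 * r))) as [K1 HK1]; [apply Rdiv_lt_0_compat; lra|].
  destruct (dyadic_seq_cvg y Hy (eps / (4 * r))) as [K2 HK2]; [apply Rdiv_lt_0_compat; lra|].
  set (k := Nat.max (Nat.max N1 N2) (Nat.max K1 K2)).
  specialize (HN1 k ltac:(lia)); specialize (HN2 k ltac:(lia)).
  destruct (seq_dist_exists _ _ (square_summable_dyadic_seq k x)
              (square_summable_dyadic_seq k y)) as [Dk HDk].
  destruct (seq_dist_exists _ _ (square_summable_dyadic_seq k x)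
              (square_summable_cons 1 _ Hx)) as [ex Hex].
  destruct (seq_dist_exists _ _ (square_summable_dyadic_seq k y)
              (square_summable_cons 1 _ Hy)) as [ey Hey].
  pose proof (HK1 k ex ltac:(lia) Hex). pose proof (HK2 k ey ltac:(lia) Hey).
  assert (Hcompare : Rabs (Dk - d) <= ex + ey).
  { apply (seq_dist_quad X Hfin _ _ _ _ _ _ _ _ (square_summable_dyadic_seq k x)
             (square_summable_dyadic_seq k y) (square_summable_cons 1 _ Hx)
             (square_summable_cons 1 _ Hy) HDk (seq_dist_cons 1 _ _ _ Hd) Hex Hey). }
  assert (Hscaled : Rabs (r * Dk - r * d) <= r * (ex + ey)).
  { rewrite <- Rmult_minus_distr_l, Rabs_mult, (Rabs_right r) by lra.
    apply Rmult_le_compat_l; lra. }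
  assert (r * (ex + ey) < eps / 2).
  { replace (eps / 2) with (r * (eps / (4 * r) + eps / (4 * r))) by (field; lra).
    apply Rmult_lt_compat_l; lra. }
  pose proof (vnorm_sub_quad X tx ty (approx k x) (approx k y)) as Hquad.
  rewrite (approx_dist 0 k x y Dk HDk : vnorm X (vsub X (approx k x) (approx k y)) = r * Dk)
    in Hquad.
  simpl proj1_sig in HN1, HN2. fold tx in HN1. fold ty in HN2.
  rewrite vnorm_sub_sym in HN1, HN2.
  apply Rabs_le_between in Hquad. apply Rabs_le_between in Hscaled.
  apply Rabs_def1; lra.
Qed.

End ScaledIsometry.

(** * Isometries of l_2 into strictly convex spaces are linear *)

Definition l2_zero : l2 :=
  exist _ (fun _ => 0) (square_summable_finite (fun _ => 0) 0 (fun _ _ => eq_refl)).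

Definition l2_scal (c : R) (x : l2) : l2 :=
  exist _ (fun n => c * proj1_sig x n) (square_summable_scal c _ (proj2_sig x)).

Lemma l2_dist_exists (x y : l2) : exists d, l2_dist_is x y d.
Proof. apply seq_dist_exists; [apply (proj2_sig x) | apply (proj2_sig y)]. Qed.

Section IsometryIsLinear.
Variable X : Banach.
Hypothesis Hsc : strictly_convex X.
Variable T : l2 -> X.
Variable r : R.
Hypothesis HT : forall x y d, l2_dist_is x y d -> vnorm X (vsub X (T x) (T y)) = r * d.
Hypothesis T0 : T l2_zero = vzero X.

Lemma isometry_midpoint (x y m : l2) :
  (forall n, proj1_sig m n = (proj1_sig x n + proj1_sig y n) / 2) ->
  T m = vscal X (1/2) (vadd X (T x) (T y)).
Proof.
  intros Hm. destruct (l2_dist_exists x y) as [d Hd].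
  assert (H1 : l2_dist_is m x (1/2 * d)).
  { apply (seq_dist_scale (proj1_sig x) (proj1_sig y)); [exact Hd | lra |].
    intros i; rewrite Hm; field. }
  assert (H2 : l2_dist_is y m (1/2 * d)).
  { apply (seq_dist_scale (proj1_sig x) (proj1_sig y)); [exact Hd | lra |].
    intros i; rewrite Hm; field. }
  apply vmidpoint_of_vsub, (strictly_convex_between X Hsc _ _ _ (1/2) (r * d)); [lra | | |].
  - rewrite (HT _ _ _ H1). field.
  - rewrite (HT _ _ _ H2). field.
  - rewrite (HT _ _ _ (seq_dist_sym _ _ _ Hd)). ring.
Qed.

Lemma isometry_opp (x w : l2) : (forall n, proj1_sig w n = - proj1_sig x n) ->
  T w = vopp X (T x).
Proof.
  intros Hw.
  assert (E := isometry_midpoint x w l2_zero ltac:(intros n; rewrite Hw; simpl; field)).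
  rewrite T0 in E. apply (f_equal (vscal X 2)) in E.
  rewrite vscal_0r, vscal_assoc in E. replace (2 * (1 / 2)) with 1 in E by field.
  rewrite vscal_1 in E.
  apply (vadd_reg_r X _ _ (T x)).
  rewrite (vadd_comm X (vopp X (T x))), vadd_opp, vadd_comm. symmetry; exact E.
Qed.

Lemma isometry_scal_le1 (x w : l2) c : 0 <= c <= 1 ->
  (forall n, proj1_sig w n = c * proj1_sig x n) -> T w = vscal X c (T x).
Proof.
  intros Hc Hw. destruct (l2_dist_exists l2_zero x) as [d Hd].
  assert (H1 : l2_dist_is w l2_zero (c * d)).
  { apply seq_dist_sym, (seq_dist_scale (proj1_sig l2_zero) (proj1_sig x)); [exact Hd | lra |].
    intros i; rewrite Hw; simpl; ring. }
  assert (H2 : l2_dist_is x w ((1 - c) * d)).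
  { apply (seq_dist_scale (proj1_sig x) (proj1_sig l2_zero)); [apply seq_dist_sym, Hd | lra |].
    intros i; rewrite Hw; simpl; ring. }
  pose proof (strictly_convex_between X Hsc (T l2_zero) (T w) (T x) c (r * d) Hc) as C.
  rewrite (HT _ _ _ H1), (HT _ _ _ H2), (HT _ _ _ (seq_dist_sym _ _ _ Hd)), T0, !vsub_0r in C.
  apply C; ring.
Qed.

Lemma isometry_scal_ge0 (x w : l2) c : 0 <= c ->
  (forall n, proj1_sig w n = c * proj1_sig x n) -> T w = vscal X c (T x).
Proof.
  intros Hc Hw. destruct (Rle_dec c 1) as [Hc1|Hc1]; [apply isometry_scal_le1; [lra | exact Hw]|].
  assert (E : T x = vscal X (/ c) (T w)).
  { apply isometry_scal_le1.
    - split; [left; apply Rinv_0_lt_compat; lra|].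
      rewrite <- Rinv_1. apply Rinv_le_contravar; lra.
    - intros n. rewrite Hw. field. lra. }
  rewrite E, vscal_assoc, Rinv_r, vscal_1 by lra. reflexivity.
Qed.

Lemma isometry_scal (x w : l2) c : (forall n, proj1_sig w n = c * proj1_sig x n) ->
  T w = vscal X c (T x).
Proof.
  intros Hw. destruct (Rle_dec 0 c); [apply isometry_scal_ge0; assumption|].
  rewrite (isometry_scal_ge0 (l2_scal (-1) x) w (- c));
    [| lra | intros i; cbn [proj1_sig l2_scal]; rewrite Hw; ring].
  rewrite (isometry_opp x (l2_scal (-1) x)) by (intros i; cbn [proj1_sig l2_scal]; ring).
  rewrite vopp_scal, vscal_assoc. f_equal. ring.
Qed.

Lemma isometry_linear (x y z : l2) a b :
  (forall n, proj1_sig z n = a * proj1_sig x n + b * proj1_sig y n) ->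
  T z = vadd X (vscal X a (T x)) (vscal X b (T y)).
Proof.
  intros Hz.
  assert (E := isometry_midpoint (l2_scal a x) (l2_scal b y) (l2_scal (1/2) z)
                 ltac:(intros n; cbn [proj1_sig l2_scal]; rewrite Hz; field)).
  rewrite (isometry_scal z (l2_scal (1/2) z) (1/2)),
          (isometry_scal x (l2_scal a x) a), (isometry_scal y (l2_scal b y) b) in E
    by (intros; reflexivity).
  apply (f_equal (vscal X 2)) in E. rewrite !vscal_assoc in E.
  replace (2 * (1/2)) with 1 in E by field. rewrite !vscal_1 in E. exact E.
Qed.

Lemma isometry_l2_isomorphic_embeds : 0 < r -> l2_isomorphic_embeds X.
Proof.
  intros Hr. exists T, r, r. split; [exact Hr|]. split; [exact isometry_linear|].
  intros x d [Hd0 Hd]. assert (Hx0 : l2_dist_is x l2_zero d).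
  { split; [exact Hd0|].
    apply (isum_ext (fun n => proj1_sig x n ^ 2)); [intros; simpl; ring | exact Hd]. }
  rewrite <- (vsub_0r X (T x)), <- T0, (HT _ _ _ Hx0). lra.
Qed.

End IsometryIsLinear.

Definition integer_lists (X : Banach) (Hfin : l2_finitely_isometric X) : MetricSpace := {|
  mcar := list Z;
  mdist := list_dist;
  mdist_eq0 := list_dist_eq0;
  mdist_sym := list_dist_sym;
  mdist_triangle := fun x y z =>
    seq_dist_triangle X Hfin _ _ _ _ _ _ (square_summable_list_coords x)
      (square_summable_list_coords y) (square_summable_list_coords z)
      (list_dist_spec x y) (list_dist_spec y z) (list_dist_spec x z) |}.

Definition list_to_l2 (l : list Z) : l2 := exist _ (list_coords l) (square_summable_list_coords l).

Theorem theorem1p7 (X : Banach)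
  (Hsc : strictly_convex X)
  (Hfin : l2_finitely_isometric X)
  (Hnot : ~ l2_isomorphic_embeds X) :
  exists (A : MetricSpace) (C : R),
    1 <= C /\ locally_finite A /\
    (forall s : list A, bilip_embeds_le A X (fun x => In x s) C) /\
    ~ bilip_embeds_le A X (fun _ => True) C.
Proof.
  exists (integer_lists X Hfin), 1. split; [lra|]. split; [|split].
  - exact list_dist_ball_finite.
  - intros s. destruct (Hfin (map list_to_l2 s)) as [g Hg].
    exists (fun a => g (list_to_l2 a)), 1. split; [lra|]. intros x y Hx Hy.
    rewrite (Hg (list_to_l2 x) (list_to_l2 y) (list_dist x y));
      [simpl; lra | apply in_map; exact Hx | apply in_map; exact Hy | apply list_dist_spec].
  - intros [f [r [Hr Hf]]]. apply Hnot.
    assert (Hf' : forall a b, vnorm X (vsub X (f a) (f b)) = r * list_dist a b).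
    { intros a b. specialize (Hf a b I I). simpl in Hf. lra. }
    set (L := approx_lim X Hsc Hfin f r Hr Hf').
    apply (isometry_l2_isomorphic_embeds X Hsc (fun x => vsub X (L x) (L l2_zero)) r);
      [| | exact Hr].
    + intros x y d Hd. rewrite vsub_vsub_cancel. apply approx_lim_isometry, Hd.
    + apply vsub_diag.
Qed.
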